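(* For all $l=1,\ldots,n-3$ and $m,s=1,\ldots,N$, the operator-valued monodromy matrix $\hat M_{[k]}$ satisfies \[ \nabla_{\boldsymbol\sigma_l,m} \nabla_{\boldsymbol\sigma_l,s}^{-1} \hat M_{[k]} = \hat M_{[k]} \nabla_{\boldsymbol\sigma_l,m} \nabla_{\boldsymbol\sigma_l,s}^{-1} \,. \] Equivalently, $\hat M_{[k]}$ is invariant under shifts of any $\boldsymbol\sigma_l$ by vectors of the root lattice of $\mathfrak{sl}_N$ (vectors in $\mathbb Z^N$ with vanishing sum of components).
   Context: Setting: $W_N$-algebra with central charge $c=N-1$; semi-degenerate conformal blocks on the sphere with generic punctures at $z_0=0$ (weight $\boldsymbol\theta_0$) and $z_{n-1}=\infty$ (weight $\boldsymbol\theta_{n-1}$), semi-degenerate fields $V_{a_k}(z_k)$ with weights $a_k\boldsymbol h_1$ at $z_1,\ldots,z_{n-2}$, and intermediate weights $\boldsymbol\sigma_1,\ldots,\boldsymbol\sigma_{n-3}\in\mathbb C^N$ (components summing to zero). Here $\boldsymbol h_s$ has components $h_s^{(k)}=\delta_{sk}-1/N$. The fusion matrix is $F_{lj}(\boldsymbol\sigma',a,\boldsymbol\sigma)=\prod_{k\ne l}\frac{\sin\pi((a+1)/N+\sigma'^{(j)}-\sigma^{(k)})}{\sin\pi(\sigma^{(k)}-\sigma^{(l)})}$, with inverse $F^{-1}(\boldsymbol\sigma',a,\boldsymbol\sigma)=F(-\boldsymbol\sigma,a,-\boldsymbol\sigma')$. The braiding matrix is $B(\boldsymbol\sigma)=\operatorname{diag}(e^{i\pi\sigma^{(1)}},\ldots,e^{i\pi\sigma^{(N)}})$.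 The shift operator $\nabla_{\boldsymbol\sigma,s}$ acts on functions of $\boldsymbol\sigma$ by $\nabla_{\boldsymbol\sigma,s}\mathcal F(\boldsymbol\sigma)=\mathcal F(\boldsymbol\sigma+\boldsymbol h_s)$, and $\nabla_{\boldsymbol\sigma}=\operatorname{diag}(\nabla_{\boldsymbol\sigma,1},\ldots,\nabla_{\boldsymbol\sigma,N})$. Define \[ \hat V_{[k]} = B(-\boldsymbol{\theta}_{n-1}) F^{-1}(-\boldsymbol{\theta}_{n-1},a_{n-2}-1,\boldsymbol{\sigma}_{n-3}) \nabla_{\boldsymbol{\sigma}_{n-3}} F^{-1}(\boldsymbol{\sigma}_{n-3},a_{n-3},\boldsymbol{\sigma}_{n-4}) \nabla_{\boldsymbol{\sigma}_{n-4}} \cdots \nabla_{\boldsymbol{\sigma}_{k+1}} F^{-1}(\boldsymbol{\sigma}_{k+1},a_{k+1},\boldsymbol{\sigma}_{k}), \] and $\hat M_{[k]}=\hat V_{[k]}B^2(\boldsymbol\sigma_k)\hat V_{[k]}^{-1}$. This $\hat M_{[k]}$ is the operator-valued monodromy of the column of conformal blocks $\mathcal F_m(\boldsymbol\sigma|y)=C_m\langle -\boldsymbol\theta_{n-1}+\boldsymbol h_m|\Psi(y)V_{a_{n-2}}(z_{n-2})\mathcal P_{\boldsymbol\sigma_{n-3}}\cdots\mathcal P_{\boldsymbol\sigma_1}V_{a_1}(z_1)|\boldsymbol\theta_0\rangle$ (with $\Psi(y)$ the column of degenerate fields $\psi_j(y)$, $C_m=\operatorname{diag}((-1)^{N\delta_{jm}})$)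 under analytic continuation in $y$ along the loop encircling $z_0,\ldots,z_k$. *)

From HB Require Import structures.
From mathcomp Require Import all_boot all_order all_algebra.
From mathcomp Require Import all_classical all_reals.
From mathcomp Require Import sequences exp trigo.
From mathcomp Require Import complex.
Set Implicit Arguments. Unset Strict Implicit. Unset Printing Implicit Defensive.
Import Order.TTheory GRing.Theory Num.Theory.
Local Open Scope ring_scope.
Local Open Scope complex_scope.

Section Defs.
Variable R : realType.
Local Notation C := R[i].

Definition cexp (z : C) : C :=
  (expR (complex.Re z))%:C * ((cos (complex.Im z)) +i* (sin (complex.Im z))).
Definition csin (z : C) : C := (cexp ('i * z) - cexp (- ('i * z))) / (2%:R * 'i).
Definition cpi : C := (pi : R)%:C.

Variable N : nat.
Definition vec := 'I_N -> C.
Definition hvec (s : 'I_N) : vec := fun c => (c == s)%:R - (N%:R)^-1.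

Definition Fmat (sp : vec) (a : C) (sg : vec) : 'M[C]_N :=
  \matrix_(l, j) \prod_(k < N | k != l)
     (csin (cpi * ((a + 1) / N%:R + sp j - sg k)) / csin (cpi * (sg k - sg l))).
Definition Finv (sp : vec) (a : C) (sg : vec) : 'M[C]_N :=
  Fmat (fun c => - sg c) a (fun c => - sp c).
Definition Bmat (sg : vec) : 'M[C]_N :=
  \matrix_(i, j) ((i == j)%:R * cexp ('i * cpi * sg i)).
Definition vopp (v : vec) : vec := fun c => - v c.

(** configurations (σ_j)_j ; only indices 1..n-3 are meaningful *)
Definition conf := nat -> vec.
Definition shiftc (sg : conf) (j : nat) (v : vec) : conf :=
  fun i => if i == j then (fun c => sg i c + v c) else sg i.

Definition fn := conf -> C.
Definition nabla (j : nat) (s : 'I_N) (f : fn) : fn := fun sg => f (shiftc sg j (hvec s)).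
Definition nablaV (j : nat) (s : 'I_N) (f : fn) : fn :=
  fun sg => f (shiftc sg j (vopp (hvec s))).

(** columns of functions and operator-valued N x N matrices acting on them *)
Definition colfn := 'I_N -> fn.
Definition op := colfn -> colfn.
Definition mulop (A : conf -> 'M[C]_N) : op :=
  fun G i sg => \sum_(j < N) A sg i j * G j sg.
Definition nablaM (j : nat) : op := fun G i => nabla j i (G i).
Definition nablaMV (j : nat) : op := fun G i => nablaV j i (G i).
Definition Tshift (l : nat) (m s : 'I_N) : op := fun G i => nabla l m (nablaV l s (G i)).

Variables (n : nat) (theta : vec) (a : nat -> C) (k : nat).

(** tail d = ∇_{σ_{k+d}} F^{-1}(σ_{k+d},a_{k+d},σ_{k+d-1}) ... ∇_{σ_{k+1}} F^{-1}(σ_{k+1},a_{k+1},σ_k) *)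
Fixpoint Vtail (d : nat) : op :=
  match d with
  | 0 => id
  | d'.+1 => fun G => nablaM (k + d'.+1)
       (mulop (fun sg => Finv (sg (k + d'.+1)) (a (k + d'.+1)) (sg (k + d'))) (Vtail d' G))
  end.
(** its inverse, using (F^{-1})^{-1} = F and ∇^{-1} *)
Fixpoint VtailV (d : nat) : op :=
  match d with
  | 0 => id
  | d'.+1 => fun G => VtailV d'
       (mulop (fun sg => Fmat (sg (k + d'.+1)) (a (k + d'.+1)) (sg (k + d')))
          (nablaMV (k + d'.+1) G))
  end.

Definition Vhat : op := fun G =>
  mulop (fun _ => Bmat (vopp theta))
    (mulop (fun sg => Finv (vopp theta) (a (n - 2)%N - 1) (sg (n - 3)%N))
       (Vtail (n - 3 - k) G)).
Definition VhatV : op := fun G =>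
  VtailV (n - 3 - k)
    (mulop (fun sg => Fmat (vopp theta) (a (n - 2)%N - 1) (sg (n - 3)%N))
       (mulop (fun _ => Bmat theta) G)).
Definition Mhat : op := fun G =>
  Vhat (mulop (fun sg => Bmat (sg k) *m Bmat (sg k)) (VhatV G)).
End Defs.

(** Shifting [σ_l] by [h_m - h_s = e_m - e_s] moves it by an integer vector [d].
    Each sine in a fusion matrix that involves [σ_l] then only changes sign, and
    these signs factor out of [F] and [F^{-1}] as diagonal matrices
    [D = diag((-1)^{(N-1) d_c})] on the left and on the right, whereas [B^2(σ_k)]
    is unchanged since [e^{2 i π d} = 1].  The matrices [D] do not depend on [σ],
    so they commute with every [∇]; along the product defining [V̂] the sign
    matrices of adjacent factors meet and cancel ([D^2 = 1]), the one left over
    at [σ_k] commutes with the diagonal [B^2(σ_k)] and cancels against its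
    partner from [V̂^{-1}]. *)

From HB Require Import structures.
From mathcomp Require Import all_boot all_order all_algebra.
From mathcomp Require Import all_classical all_reals.
From mathcomp Require Import sequences exp trigo.
From mathcomp Require Import complex.
From mathcomp Require Import ring.
Import Order.TTheory GRing.Theory Num.Theory.
Local Open Scope ring_scope.
Local Open Scope complex_scope.
Set Implicit Arguments. Unset Strict Implicit.

Section ComplexExponential.
Variable R : realType.
Local Notation C := R[i].

Lemma cexpD (z w : C) : cexp (z + w) = cexp z * cexp w.
Proof.
case: z => x y; case: w => u v; rewrite /cexp /= expRD cosD sinD.
by apply/eqP; rewrite eq_complex /=; apply/andP; split; apply/eqP; ring.
Qed.

Lemma cexp0 : cexp (0 : C) = 1.
Proof. by rewrite /cexp /= expR0 cos0 sin0 mul1r. Qed.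

Lemma cexpNK (z : C) : cexp (- z) * cexp z = 1.
Proof. by rewrite -cexpD addNr cexp0. Qed.

Lemma cexp_ipi : cexp ('i * cpi R) = -1.
Proof.
rewrite /cexp /cpi /= !(mul0r, mul1r, mulr0, subr0, addr0, subrr, add0r, oppr0).
rewrite expR0 cospi sinpi.
by apply/eqP; rewrite eq_complex /=; apply/andP; split; apply/eqP; ring.
Qed.

Lemma cexp_ipi_bool (b : bool) : cexp ('i * cpi R * b%:R) = (-1) ^+ b.
Proof. by case: b; rewrite ?mulr1 ?cexp_ipi // mulr0 cexp0. Qed.

End ComplexExponential.

Section SignedShifts.
Variables (R : realType) (N : nat).
Local Notation C := R[i].
Local Notation vec := (vec R N).
Local Notation cpi := (cpi R).

Definition vadd (v w : vec) : vec := fun c => v c + w c.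

Lemma vadd0 (v : vec) : vadd v (fun _ => 0) = v.
Proof. by apply: funext => c; rewrite /vadd addr0. Qed.

(* [esign d c] is [e^(i pi d_c)]; [integral d] says [d] has integer entries,
   so that [esign d c = (-1)^(d_c)]. *)
Definition esign (d : vec) (c : 'I_N) : C := cexp ('i * cpi * d c).
Definition integral (d : vec) : Prop := forall c, esign d c * esign d c = 1.

Lemma esign0 c : esign (fun _ => 0) c = 1.
Proof. by rewrite /esign mulr0 cexp0. Qed.

Lemma integral0 : integral (fun _ => 0).
Proof. by move=> c; rewrite esign0 mulr1. Qed.

Lemma esignD (d1 d2 : vec) c : esign (vadd d1 d2) c = esign d1 c * esign d2 c.
Proof. by rewrite /esign /vadd mulrDr cexpD. Qed.

Lemma integralD (d1 d2 : vec) : integral d1 -> integral d2 -> integral (vadd d1 d2).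
Proof. by move=> d1Z d2Z c; rewrite esignD mulrACA d1Z d2Z mulr1. Qed.

Lemma integral_bool (b : 'I_N -> bool) : integral (fun c => (b c)%:R).
Proof. by move=> c; rewrite /esign cexp_ipi_bool -expr2 sqrr_sign. Qed.

Lemma cexp_ipiN (d : vec) c : integral d ->
  cexp (- ('i * cpi * d c)) = esign d c.
Proof.
move=> dZ; rewrite -[LHS]mulr1 -(dZ c) mulrA.
by rewrite [X in X * _ = _]cexpNK mul1r.
Qed.

Lemma esignN (d : vec) c : integral d -> esign (vopp d) c = esign d c.
Proof. by move=> dZ; rewrite -(cexp_ipiN c dZ) /esign /vopp mulrN. Qed.

Lemma integralN (d : vec) : integral d -> integral (vopp d).
Proof. by move=> dZ c; rewrite esignN. Qed.

Lemma csin_shift (d : vec) z c : integral d ->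
  csin (z + cpi * d c) = esign d c * csin z.
Proof.
move=> dZ; rewrite /csin mulrA; congr (_ * _).
have -> : 'i * (z + cpi * d c) = 'i * cpi * d c + 'i * z by ring.
by rewrite opprD !cexpD (cexp_ipiN c dZ) mulrBr.
Qed.

Lemma csin_shiftN (d : vec) z c : integral d ->
  csin (z - cpi * d c) = esign d c * csin z.
Proof.
move=> dZ; have := csin_shift z c (integralN dZ).
by rewrite (esignN c dZ) /vopp mulrN.
Qed.

Lemma Fmat_vadd (d1 d2 : vec) sp a sg i j : integral d1 -> integral d2 ->
  Fmat (vadd sp d1) a (vadd sg d2) i j
  = esign d2 i ^+ N.-1 * Fmat sp a sg i j * esign d1 j ^+ N.-1.
Proof.
move=> d1Z d2Z; have prod_const x : \prod_(k < N | k != i) x = x ^+ N.-1.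
  by rewrite prodr_const cardC1 card_ord.
rewrite !mxE mulrAC -exprMn -prod_const -big_split; apply: eq_bigr => k _ /=.
rewrite /vadd.
have -> : cpi * ((a + 1) / N%:R + (sp j + d1 j) - (sg k + d2 k))
  = cpi * ((a + 1) / N%:R + sp j - sg k) + cpi * d1 j - cpi * d2 k by ring.
have -> : cpi * (sg k + d2 k - (sg i + d2 i))
  = cpi * (sg k - sg i) + cpi * d2 k - cpi * d2 i by ring.
have ratio (x y u v w : C) : w * w = 1 -> w * (v * x) / (u * (w * y)) = u^-1 * v * (x / y).
  by move=> ww; rewrite !invfM (mulr1_eq ww) -[RHS]mul1r -ww; ring.
by rewrite !csin_shiftN // !csin_shift // ratio // (mulr1_eq (d2Z i)).
Qed.

Lemma Finv_vadd (d1 d2 : vec) sp a sg i j : integral d1 -> integral d2 ->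
  Finv (vadd sp d1) a (vadd sg d2) i j
  = esign d1 i ^+ N.-1 * Finv sp a sg i j * esign d2 j ^+ N.-1.
Proof.
move=> d1Z d2Z; have vaddN v d : (fun c => - vadd v d c) = vadd (vopp v) (vopp d).
  by apply: funext => c; rewrite /vadd opprD.
have [d1NZ d2NZ] := (integralN d1Z, integralN d2Z).
by rewrite /Finv !vaddN Fmat_vadd ?esignN.
Qed.

Lemma Bmat_mul (v w : vec) : Bmat v *m Bmat w = Bmat (vadd v w).
Proof.
apply/matrixP => i j; rewrite !mxE (bigD1 i) //= big1 => [|x /negbTE xi]; last first.
  by rewrite !mxE eq_sym xi /= !mul0r.
rewrite !mxE eqxx mul1r addr0 mulrCA; congr (_ * _).
by rewrite /vadd mulrDr cexpD.
Qed.

Lemma Bmat_conj (v : vec) (f : 'I_N -> C) i j : (forall c, f c * f c = 1) ->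
  Bmat v i j = f i * Bmat v i j * f j.
Proof.
move=> fK; rewrite mxE; case: eqP => [<-|_]; last by rewrite !(mul0r, mulr0).
by rewrite [in RHS]mulrAC fK !mul1r.
Qed.

Lemma Bmat_sqr_vadd (v d : vec) : integral d ->
  Bmat (vadd v d) *m Bmat (vadd v d) = Bmat v *m Bmat v.
Proof.
move=> dZ; rewrite !Bmat_mul; apply/matrixP => i j; rewrite !mxE; congr (_ * _).
have -> : 'i * cpi * vadd (vadd v d) (vadd v d) i
  = 'i * cpi * vadd v v i + ('i * cpi * d i + 'i * cpi * d i) by rewrite /vadd; ring.
by rewrite !cexpD [X in _ * X](dZ i) mulr1.
Qed.

End SignedShifts.

Section Operators.
Variables (R : realType) (N : nat).
Local Notation C := R[i].
Local Notation conf := (conf R N).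
Local Notation op := (op R N).

Definition diagop (f : 'I_N -> C) : op := fun G i sg => f i * G i sg.

Lemma diagopK (f : 'I_N -> C) : (forall i, f i * f i = 1) ->
  forall G, diagop f (diagop f G) = G.
Proof.
by move=> fK G; apply: funext => i; apply: funext => sg; rewrite /diagop mulrA fK mul1r.
Qed.

Lemma diagop1 G : diagop (fun _ => 1) G = G.
Proof. by apply: funext => i; apply: funext => sg; rewrite /diagop mul1r. Qed.

Lemma mulop_conj (A A' : conf -> 'M[C]_N) f g G :
  (forall sg i j, A' sg i j = f i * A sg i j * g j) ->
  mulop A' G = diagop f (mulop A (diagop g G)).
Proof.
move=> AE; apply: funext => i; apply: funext => sg.
by rewrite /mulop /diagop mulr_sumr; apply: eq_bigr => j _; rewrite AE !mulrA.
Qed.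

Lemma nablaM_diagop j f G : nablaM j (diagop f G) = diagop f (nablaM j G).
Proof. by []. Qed.

Lemma nablaMV_diagop j f G : nablaMV j (diagop f G) = diagop f (nablaMV j G).
Proof. by []. Qed.

Lemma shiftcC (sg : conf) i j v w :
  shiftc (shiftc sg i v) j w = shiftc (shiftc sg j w) i v.
Proof.
apply: funext => x; rewrite /shiftc /=.
by case: (x == i); case: (x == j) => //; apply: funext => c; rewrite addrAC.
Qed.

End Operators.

Section RootShift.
Variables (R : realType) (N : nat) (l : nat) (m s : 'I_N).
Local Notation C := R[i].
Local Notation vec := (vec R N).
Local Notation conf := (conf R N).
Local Notation T := (Tshift l m s).

Definition tshift_conf (sg : conf) : conf :=
  shiftc (shiftc sg l (hvec R m)) l (vopp (hvec R s)).

Lemma tshift_conf_shiftc sg j v :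
  tshift_conf (shiftc sg j v) = shiftc (tshift_conf sg) j v.
Proof. by rewrite /tshift_conf (shiftcC sg j l) (shiftcC (shiftc sg l _) j l). Qed.

Lemma Tshift_nablaM j (G : colfn R N) : T (nablaM j G) = nablaM j (T G).
Proof.
apply: funext => i; apply: funext => sg.
change (G i (shiftc (tshift_conf sg) j (hvec R i)) = G i (tshift_conf (shiftc sg j (hvec R i)))).
by rewrite tshift_conf_shiftc.
Qed.

Lemma Tshift_nablaMV j (G : colfn R N) : T (nablaMV j G) = nablaMV j (T G).
Proof.
apply: funext => i; apply: funext => sg.
change (G i (shiftc (tshift_conf sg) j (vopp (hvec R i)))
        = G i (tshift_conf (shiftc sg j (vopp (hvec R i))))).
by rewrite tshift_conf_shiftc.
Qed.

Lemma Tshift_mulop_const (M : 'M[C]_N) G :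
  T (mulop (fun _ => M) G) = mulop (fun _ => M) (T G).
Proof. by []. Qed.

Lemma Tshift_mulop_conj (A : conf -> 'M[C]_N) f g G :
  (forall sg i j, A (tshift_conf sg) i j = f i * A sg i j * g j) ->
  T (mulop A G) = diagop f (mulop A (diagop g (T G))).
Proof. exact: mulop_conj. Qed.

Definition root_vec : vec := vadd (fun c => (c == m)%:R) (vopp (fun c => (c == s)%:R)).

Lemma integral_root : integral root_vec.
Proof.
exact: integralD (integral_bool _ _) (integralN (integral_bool _ _)).
Qed.

Definition shift_at (x : nat) : vec := if x == l then root_vec else fun _ => 0.

Lemma integral_shift_at x : integral (shift_at x).
Proof. by rewrite /shift_at; case: eqP => _; [apply: integral_root | apply: integral0]. Qed.

Lemma tshift_confE sg x : tshift_conf sg x = vadd (sg x) (shift_at x).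
Proof.
rewrite /tshift_conf /shift_at /shiftc; case: eqP => [->|_]; last by rewrite vadd0.
by apply: funext => c; rewrite /root_vec /vadd /vopp /hvec; ring.
Qed.

Definition fsign (x : nat) (c : 'I_N) : C := esign (shift_at x) c ^+ N.-1.

Lemma fsignK x c : fsign x c * fsign x c = 1.
Proof. by rewrite -exprMn integral_shift_at expr1n. Qed.

Lemma diagop_fsignK x (G : colfn R N) : diagop (fsign x) (diagop (fsign x) G) = G.
Proof. by rewrite diagopK //; apply: fsignK. Qed.

Lemma Tshift_Finv x y b G :
  T (mulop (fun sg => Finv (sg x) b (sg y)) G)
  = diagop (fsign x) (mulop (fun sg => Finv (sg x) b (sg y)) (diagop (fsign y) (T G))).
Proof.
by apply: Tshift_mulop_conj => sg i j; rewrite !tshift_confE Finv_vadd //; apply: integral_shift_at.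
Qed.

Lemma Tshift_Fmat x y b G :
  T (mulop (fun sg => Fmat (sg x) b (sg y)) G)
  = diagop (fsign y) (mulop (fun sg => Fmat (sg x) b (sg y)) (diagop (fsign x) (T G))).
Proof.
by apply: Tshift_mulop_conj => sg i j; rewrite !tshift_confE Fmat_vadd //; apply: integral_shift_at.
Qed.

Lemma Tshift_Finv_const v y b G :
  T (mulop (fun sg => Finv v b (sg y)) G)
  = mulop (fun sg => Finv v b (sg y)) (diagop (fsign y) (T G)).
Proof.
rewrite -[RHS]diagop1; apply: Tshift_mulop_conj => sg i j.
rewrite tshift_confE -{1}[v]vadd0 Finv_vadd ?esign0 ?expr1n //.
  exact: integral0.
exact: integral_shift_at.
Qed.

Lemma Tshift_Fmat_const v y b G :
  T (mulop (fun sg => Fmat v b (sg y)) G)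
  = diagop (fsign y) (mulop (fun sg => Fmat v b (sg y)) (T G)).
Proof.
rewrite -[T G]diagop1; apply: Tshift_mulop_conj => sg i j.
rewrite tshift_confE -{1}[v]vadd0 Fmat_vadd ?esign0 ?expr1n //.
  exact: integral0.
exact: integral_shift_at.
Qed.

Lemma Tshift_Bmat_sqr x (G : colfn R N) :
  T (mulop (fun sg => Bmat (sg x) *m Bmat (sg x)) G)
  = mulop (fun sg => Bmat (sg x) *m Bmat (sg x)) (T G).
Proof.
transitivity (mulop (fun sg => Bmat (tshift_conf sg x) *m Bmat (tshift_conf sg x)) (T G)).
  by [].
congr mulop; apply: funext => sg.
by rewrite tshift_confE Bmat_sqr_vadd //; apply: integral_shift_at.
Qed.

Lemma diagop_Bmat_sqr x (H : colfn R N) :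
  diagop (fsign x) (mulop (fun sg => Bmat (sg x) *m Bmat (sg x)) (diagop (fsign x) H))
  = mulop (fun sg => Bmat (sg x) *m Bmat (sg x)) H.
Proof.
rewrite [RHS](@mulop_conj _ _ (fun sg => Bmat (sg x) *m Bmat (sg x)) _ (fsign x) (fsign x)) //.
by move=> sg i j; rewrite Bmat_mul; apply: Bmat_conj; apply: fsignK.
Qed.

End RootShift.

Section Monodromy.
Variables (R : realType) (N : nat) (l : nat) (m s : 'I_N).
Variables (n : nat) (theta : vec R N) (a : nat -> R[i]) (k : nat).
Hypothesis k_le : (k <= n - 3)%N.
Local Notation T := (Tshift l m s).
Local Notation fsign := (fsign R l m s).

Lemma Vtail_tshift d (G : colfn R N) :
  T (Vtail a k d G) = diagop (fsign (k + d)) (Vtail a k d (diagop (fsign k) (T G))).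
Proof.
elim: d G => [|d IH] G /=; first by rewrite addn0 diagop_fsignK.
by rewrite Tshift_nablaM Tshift_Finv IH diagop_fsignK nablaM_diagop.
Qed.

Lemma VtailV_tshift d (G : colfn R N) :
  T (VtailV a k d G) = diagop (fsign k) (VtailV a k d (diagop (fsign (k + d)) (T G))).
Proof.
elim: d G => [|d IH] G /=; first by rewrite addn0 diagop_fsignK.
by rewrite IH Tshift_Fmat diagop_fsignK Tshift_nablaMV nablaMV_diagop.
Qed.

Lemma Vhat_tshift (G : colfn R N) :
  T (Vhat n theta a k G) = Vhat n theta a k (diagop (fsign k) (T G)).
Proof.
by rewrite /Vhat Tshift_mulop_const Tshift_Finv_const Vtail_tshift (subnKC k_le) diagop_fsignK.
Qed.

Lemma VhatV_tshift (G : colfn R N) :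
  T (VhatV n theta a k G) = diagop (fsign k) (VhatV n theta a k (T G)).
Proof.
by rewrite /VhatV VtailV_tshift (subnKC k_le) Tshift_Fmat_const diagop_fsignK Tshift_mulop_const.
Qed.

Lemma Mhat_tshift (G : colfn R N) :
  T (Mhat n theta a k G) = Mhat n theta a k (T G).
Proof.
by rewrite /Mhat Vhat_tshift Tshift_Bmat_sqr VhatV_tshift diagop_Bmat_sqr.
Qed.

End Monodromy.

Unset Implicit Arguments.

Theorem proposition4p4 (R : realType) (N n : nat) (hN : (2 <= N)%N) (theta : vec R N)
    (a : nat -> R[i]) (k : nat) (hk : (1 <= k <= n - 3)%N)
    (l : nat) (hl : (1 <= l <= n - 3)%N) (m s : 'I_N)
    (G : colfn R N) (sg : conf R N)
    (hsg : forall j, (1 <= j <= n - 3)%N -> \sum_(c < N) sg j c = 0) :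
  forall i : 'I_N,
    Tshift l m s (Mhat n theta a k G) i sg = Mhat n theta a k (Tshift l m s G) i sg.
Proof.
move=> i; have k_le : (k <= n - 3)%N by case/andP: hk.
by rewrite Mhat_tshift.
Qed.
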